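(* For any $\Delta:N\setminus\{0\}\to\mathbb N$ and any $g\in\mathbb N$, the set of types $(\Gamma,u)$ of tropical curves of degree $\Delta$ and genus $g$ that are realized by at least one tropical curve (i.e. $\mathcal T_{(\Gamma,u)}\neq\emptyset$) is finite.
   Context: $N$ is a free abelian group of rank $n\ge2$, $N_\mathbb Q=N\otimes\mathbb Q$, $N_\mathbb R=N\otimes\mathbb R$. An open graph $\Gamma$ is obtained from a connected finite graph without divalent vertices by deleting its univalent vertices; vertices $\Gamma^{[0]}$, edges $\Gamma^{[1]}$, unbounded (non-compact) edges $\Gamma^{[1]}_\infty$, weights $w:\Gamma^{[1]}\to\mathbb Z_{>0}$; flags are pairs $(V,E)$ with $V$ an endpoint of $E$. A tropical curve is (an isomorphism class of) a proper map $h:\Gamma\to N_\mathbb R$ such that each $h|_E$ is an embedding into an affine line of rational slope, $h(V)\in N_\mathbb Q$, and at each vertex $\sum_{E\ni V}w(E)u_{(V,E)}=0$, where $u_{(V,E)}\in N$ is the primitive vector from $h(V)$ in the direction of $h(E)$. Its type is the weighted graph $\Gamma$ together with the map $u$ on flags; $\mathcal T_{(\Gamma,u)}$ is the set of tropical curves of that type. Genus $=b_1(\Gamma)$. Degree: $\Delta(v)=\#\{E\in\Gamma^{[1]}_\infty:w(E)u_{(V,E)}=v\}$, $V$ the vertex of $E$. *)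

From HB Require Import structures.
From mathcomp Require Import all_boot all_order all_algebra.
Set Implicit Arguments. Unset Strict Implicit. Unset Printing Implicit Defensive.
Import Order.TTheory GRing.Theory Num.Theory.
Local Open Scope ring_scope.

(* The lattice N of rank n is 'rV[int]_n, N_Q is 'rV[rat]_n.

   A (candidate) type (Gamma, u) of a tropical curve, in half-edge (flag)
   representation:
   - vertices   : 'I_nV
   - flags      : 'I_nF, each flag f sits at the vertex [fv f];
   - [opp_flag] : an involution on flags; a 2-cycle {f, opp_flag f} is a
                  bounded edge (with its two flags), a fixed point f is an
                  unbounded edge (with its unique flag);
   - [wt f]     : the weight of the edge of the flag f;
   - [dir f]    : the vector u_(V,E) in N attached to the flag f = (V,E). *)
Record ttype (n : nat) := TType {
  nV : nat;
  nF : nat;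
  fv : 'I_nF -> 'I_nV;
  opp_flag : 'I_nF -> 'I_nF;
  wt : 'I_nF -> nat;
  dir : 'I_nF -> 'rV[int]_n }.

Section Defs.
Variable n : nat.
Implicit Type T : ttype n.

Definition bounded T (f : 'I_(nF T)) : bool := opp_flag f != f.

Definition adjacent T : rel 'I_(nV T) :=
  fun x y => [exists f : 'I_(nF T), (fv f == x) && (fv (opp_flag f) == y)].

(* valence of a vertex (a loop counts twice) *)
Definition valence T (v : 'I_(nV T)) : nat := #|[set f : 'I_(nF T) | fv f == v]|.

(* (Gamma, wt) is a weighted open graph: obtained from a connected finite graph
   without divalent vertices by deleting its univalent vertices (which then
   become the free ends of the unbounded edges). *)
Definition is_open_graph T : Prop :=
  (0 < nV T)%N /\
  (forall f : 'I_(nF T), opp_flag (opp_flag f) = f) /\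
  (forall f : 'I_(nF T), (0 < wt f)%N) /\
  (forall f : 'I_(nF T), wt (opp_flag f) = wt f) /\
  (forall x y : 'I_(nV T), connect (@adjacent T) x y) /\
  (forall v : 'I_(nV T), valence v <> 1%N /\ valence v <> 2%N).

Definition nbounded T : nat := (#|[set f : 'I_(nF T) | bounded f]|)./2.

(* genus b_1(Gamma) of a connected open graph: #bounded edges - #vertices + 1
   (the unbounded edges are contractible rays) *)
Definition genus T : nat := (nbounded T + 1 - nV T)%N.

Definition has_degree (Delta : 'rV[int]_n -> nat) T : Prop :=
  forall v : 'rV[int]_n, v != 0 ->
    Delta v = #|[set f : 'I_(nF T) | ~~ bounded f & dir f *+ wt f == v]|.

Definition primitive (x : 'rV[int]_n) : Prop :=
  forall (k : int) (y : 'rV[int]_n), x = k *: y -> k = 1 \/ k = -1.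

Definition toQ (x : 'rV[int]_n) : 'rV[rat]_n := map_mx (fun z : int => z%:~R) x.

(* A tropical curve of type T, given by the positions h(V) in N_Q of its
   vertices: every u_(V,E) is the primitive vector from h(V) in the direction
   of h(E) (for a bounded edge E = {V,V'}, h(E) is the open segment from h(V)
   to h(V'); for an unbounded edge it is a ray h(V) + R_{>0} u_(V,E)), and the
   balancing condition holds at every vertex. *)
Definition is_tropical_curve {T} (h : 'I_(nV T) -> 'rV[rat]_n) : Prop :=
  (forall f : 'I_(nF T), primitive (dir f)) /\
  (forall f : 'I_(nF T), bounded f ->
     exists2 l : rat, 0 < l & h (fv (opp_flag f)) - h (fv f) = l *: toQ (dir f)) /\
  (forall v : 'I_(nV T), \sum_(f : 'I_(nF T) | fv f == v) dir f *+ wt f = 0).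

Definition realized T : Prop := exists h : 'I_(nV T) -> 'rV[rat]_n, is_tropical_curve h.

Definition ttype_iso T T' : Prop :=
  exists (sV : 'I_(nV T) -> 'I_(nV T')) (sF : 'I_(nF T) -> 'I_(nF T')),
    bijective sV /\ bijective sF /\
    (forall f : 'I_(nF T), fv (sF f) = sV (fv f)) /\
    (forall f : 'I_(nF T), opp_flag (sF f) = sF (opp_flag f)) /\
    (forall f : 'I_(nF T), wt (sF f) = wt f) /\
    (forall f : 'I_(nF T), dir (sF f) = dir f).

End Defs.

From HB Require Import structures.
From mathcomp Require Import all_boot all_order all_algebra zify.
From Stdlib Require Import Classical.
Set Implicit Arguments. Unset Strict Implicit. Unset Printing Implicit Defensive.
Import Order.TTheory GRing.Theory Num.Theory.
Local Open Scope ring_scope.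

(* Every vertex is at least
   trivalent, so the genus and the number of ends bound the numbers of vertices
   and flags.  The degree fixes the number of ends and their weighted
   directions.  Balancing across a level set of a coordinate bounds the
   weighted direction of every bounded edge by the total of the ends, and
   primitivity then bounds weights and directions. *)

Section Primitive.
Variable n : nat.
Implicit Types x y : 'rV[int]_n.

Lemma primitive_dvdz x (p : int) :
  primitive x -> 0 < p -> (forall j, x 0 j \in dvdz p) -> p = 1.
Proof.
move=> px p_gt0 p_dvd.
have : x = p *: \row_j (divz (x 0 j) p).
  by apply/rowP => j; rewrite !mxE mulrC divzK.
by case/px => // p_eq; rewrite p_eq in p_gt0.
Qed.

Lemma primitive_scale_inj x y (a b : rat) : primitive x -> primitive y ->
  0 < a -> 0 < b -> a *: toQ x = b *: toQ y -> x = y.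
Proof.
move=> px py a_gt0 b_gt0 eq_ab.
pose r := b / a.
have x_ry j : x 0 j * denq r = numq r * y 0 j.
  apply: (@intr_inj rat); rewrite !rmorphM /= numqE mulrAC; congr (_ * _).
  have := congr1 (fun M : 'rV[rat]_n => M 0 j) eq_ab; rewrite !mxE => eq_j.
  apply: (mulfI (lt0r_neq0 a_gt0)).
  by rewrite eq_j /r mulrA mulrCA mulfV ?mulr1 ?lt0r_neq0.
have cop : coprimez (numq r) (denq r) by rewrite coprimezE coprime_num_den.
have num1 : numq r = 1.
  apply: (primitive_dvdz px); first by rewrite numq_gt0 divr_gt0.
  by move=> j; rewrite -(Gauss_dvdzl _ cop) x_ry dvdz_mulr.
have den1 : denq r = 1.
  apply: (primitive_dvdz py) => [|j]; first exact: denq_gt0.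
  by rewrite coprimez_sym in cop; rewrite -(Gauss_dvdzr _ cop) -x_ry dvdz_mull.
by apply/rowP => j; have := x_ry j; rewrite num1 den1 mulr1 mul1r.
Qed.

Lemma primitiveN x : primitive x -> primitive (- x).
Proof.
move=> px k y xN; have : x = (- k) *: y by rewrite scaleNr -xN opprK.
by case/px => k_eq; [right | left]; rewrite -[k]opprK k_eq.
Qed.

Lemma primitive_coord_neq0 x : primitive x -> exists j, x 0 j != 0.
Proof.
move=> px; case: (pickP (fun j => x 0 j != 0)) => [j xj|x0]; first by exists j.
have : x = 2 *: x by apply/rowP => j; rewrite !mxE (eqP (negbFE (x0 j))) mulr0.
by case/px.
Qed.

Lemma toQN x : toQ (- x) = - toQ x.
Proof. by apply/rowP => j; rewrite !mxE rmorphN. Qed.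

Lemma primitive_scale_bound x (w D : nat) : primitive x -> (0 < w)%N ->
  (forall j, `|(x *+ w) 0 j| <= D%:Z) -> (w <= D)%N /\ forall j, `|x 0 j| <= D%:Z.
Proof.
move=> px w_gt0 xw_le.
have le_D j : `|x 0 j| * w%:Z <= D%:Z.
  by have := xw_le j; rewrite mulmxnE normrMn -mulr_natr natz.
split=> [|j]; last by have := le_D j; have : 0 <= `|x 0 j| by []; nia.
have [j /eqP xj] := primitive_coord_neq0 px; have := le_D j; nia.
Qed.

End Primitive.

Definition ends n (T : ttype n) : {set 'I_(nF T)} := [set f | ~~ bounded f].

Definition wdir n (T : ttype n) (f : 'I_(nF T)) : 'rV[int]_n := dir f *+ wt f.

Section OpenGraph.
Variables (n : nat) (T : ttype n).
Hypothesis og : is_open_graph T.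
Implicit Type f : 'I_(nF T).

Lemma opp_flagK f : opp_flag (opp_flag f) = f.
Proof. by case: og => _ []. Qed.

Lemma wt_opp f : wt (opp_flag f) = wt f.
Proof. by case: og => _ [_ [_ []]]. Qed.

Lemma wt_gt0 f : (0 < wt f)%N.
Proof. by case: og => _ [_ []]. Qed.

Lemma bounded_opp f : bounded (opp_flag f) = bounded f.
Proof. by rewrite /bounded (opp_flagK f) eq_sym. Qed.

End OpenGraph.

Section Realization.
Variables (n : nat) (T : ttype n).
Hypothesis og : is_open_graph T.
Variable h : 'I_(nV T) -> 'rV[rat]_n.
Hypothesis tc : is_tropical_curve h.
Implicit Type f g : 'I_(nF T).

Lemma dir_primitive f : primitive (dir f).
Proof. by case: tc. Qed.

Lemma edge_dir f : bounded f ->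
  exists2 l : rat, 0 < l & h (fv (opp_flag f)) - h (fv f) = l *: toQ (dir f).
Proof. by case: tc => _ [+ _]; apply. Qed.

Lemma dir_opp f : bounded f -> dir (opp_flag f) = - dir f.
Proof.
move=> bf; have bf' : bounded (opp_flag f) by rewrite (bounded_opp og).
have [l l_gt0 e1] := edge_dir bf; have [l' l'_gt0 e2] := edge_dir bf'.
rewrite (opp_flagK og) in e2.
apply: (primitive_scale_inj (a := l') (b := l)) => //.
- exact: dir_primitive.
- exact/primitiveN/dir_primitive.
by rewrite toQN scalerN -e1 -e2 opprB.
Qed.

Lemma wdir_opp f : bounded f -> wdir (opp_flag f) = - wdir f.
Proof. by move=> bf; rewrite /wdir dir_opp // (wt_opp og) mulNrn. Qed.

Lemma wdir_neq0 f : wdir f != 0.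
Proof.
have [j dj] := primitive_coord_neq0 (dir_primitive (f:=f)).
apply/eqP => /(congr1 (fun M : 'rV[int]_n => M 0 j)).
rewrite mulmxnE mxE => /eqP; rewrite mulrn_eq0 (negbTE dj) orbF.
by rewrite -leqn0 leqNgt (wt_gt0 og).
Qed.

Lemma dir_lt0E f j : bounded f ->
  (dir f 0 j < 0) = (h (fv (opp_flag f)) 0 j < h (fv f) 0 j).
Proof.
move=> bf; have [l l_gt0 e] := edge_dir bf.
have := congr1 (fun M : 'rV[rat]_n => M 0 j) e; rewrite !mxE => ej.
by rewrite -[in RHS]subr_lt0 ej pmulr_rlt0 // ltrz0.
Qed.

Section Cut.
Variable U : pred 'I_(nV T).

Lemma sum_wdir_vertex_set : \sum_(g | U (fv g)) wdir g = 0.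
Proof.
case: tc => _ [_ balanced]; rewrite (partition_big (@fv n T) U) //=.
apply: big1 => v Uv; rewrite -[RHS](balanced v); apply: eq_bigl => g.
by case: (fv g =P v) => [->|]; rewrite ?Uv ?andbF.
Qed.

Lemma sum_wdir_internal :
  \sum_(g | U (fv g) && bounded g && U (fv (opp_flag g))) wdir g = 0.
Proof.
set S := (X in X = 0).
suff S_opp : S = - S.
  apply/rowP => j; move/rowP/(_ j): S_opp; rewrite !mxE => /eqP.
  by rewrite -addr_eq0 -mulr2n mulrn_eq0 => /eqP.
rewrite {1}/S (reindex_inj (inv_inj (opp_flagK og))) /S -sumrN.
apply: eq_big => [g|g /andP [/andP [_ bg] _]].
  rewrite (bounded_opp og) (opp_flagK og).
  by case: (U (fv g)); case: (U (fv (opp_flag g))); case: (bounded g).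
by rewrite (bounded_opp og) in bg; rewrite wdir_opp.
Qed.

Lemma sum_wdir_cut :
  \sum_(g in ends T | U (fv g)) wdir g =
  - \sum_(g | U (fv g) && bounded g && ~~ U (fv (opp_flag g))) wdir g.
Proof.
have := sum_wdir_vertex_set; rewrite (bigID (@bounded n T)) /=.
rewrite (bigID (fun g => U (fv (opp_flag g)))) /=.
rewrite sum_wdir_internal add0r => /eqP; rewrite addrC addr_eq0 => /eqP <-.
by apply: eq_bigl => g; rewrite inE andbC.
Qed.
End Cut.

(* Cut along the half-space [U] above the lower endpoint of [f]: every bounded
   edge leaving [U] descends in coordinate [j], [f] among them, and by
   [sum_wdir_cut] their total is balanced by the ends leaving [U]. *)
Lemma flux_bound_neg f j : bounded f -> dir f 0 j < 0 ->
  `|wdir f 0 j| <= \sum_(g in ends T) `|wdir g 0 j|.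
Proof.
move=> bf f_neg.
pose U v := h (fv (opp_flag f)) 0 j < h v 0 j.
pose cut g := U (fv g) && bounded g && ~~ U (fv (opp_flag g)).
have cut_le0 g : cut g -> wdir g 0 j <= 0.
  case/andP => /andP [Ug bg] nUg; rewrite mulmxnE mulrn_wle0 // ltW //.
  by rewrite dir_lt0E // (le_lt_trans _ Ug) // leNgt.
have cut_f : cut f by rewrite /cut /U /= -dir_lt0E ?f_neg ?bf ?ltxx.
have := congr1 (fun M : 'rV[int]_n => M 0 j) (sum_wdir_cut U).
rewrite mxE !summxE => cut_eq.
rewrite ler0_norm ?cut_le0 //.
apply: (@le_trans _ _ (- \sum_(g | cut g) wdir g 0 j)).
  rewrite (bigD1 f) //= opprD lerDl -sumrN sumr_ge0 // => g /andP [cut_g _].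
  by rewrite oppr_ge0 cut_le0.
rewrite -cut_eq; apply: (le_trans (ler_sum _ (fun g _ => ler_norm (wdir g 0 j)))).
by rewrite [leRHS](bigID (fun g => U (fv g))) /= lerDl sumr_ge0.
Qed.

Lemma flux_bound f j : bounded f ->
  `|wdir f 0 j| <= \sum_(g in ends T) `|wdir g 0 j|.
Proof.
move=> bf; have bf' : bounded (opp_flag f) by rewrite (bounded_opp og).
case: (ltrgt0P (dir f 0 j)) => [f_pos|f_neg|f0]; last 2 first.
- exact: flux_bound_neg.
- by rewrite mulmxnE f0 mul0rn normr0 sumr_ge0.
have -> : wdir f 0 j = - wdir (opp_flag f) 0 j by rewrite wdir_opp // mxE opprK.
rewrite normrN; apply: flux_bound_neg => //.
by rewrite dir_opp // mxE oppr_lt0.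
Qed.

End Realization.

Section Counting.
Variables (n : nat) (T : ttype n).
Hypothesis og : is_open_graph T.

Lemma card_bounded_ends :
  nF T = (#|[set f : 'I_(nF T) | bounded f]| + #|ends T|)%N.
Proof.
rewrite -[LHS]card_ord -(cardsC [set f : 'I_(nF T) | bounded f]).
by congr (_ + _)%N; apply: eq_card => f; rewrite !inE.
Qed.

Lemma sum_valence : (\sum_(v : 'I_(nV T)) valence v)%N = nF T.
Proof.
rewrite -[RHS]card_ord -sum1_card (partition_big (@fv n T) xpredT) //=.
by apply: eq_bigr => v _; rewrite /valence -sum1_card; apply: eq_bigl => f; rewrite inE.
Qed.

(* With a second vertex, connectedness rules out valence 0. *)
Lemma valence_ge3 (v : 'I_(nV T)) : (1 < nV T)%N -> (2 < valence v)%N.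
Proof.
case: og => _ [_ [_ [_ [conn val12]]]] nV_gt1; have [val1 val2] := val12 v.
suff : valence v <> 0%N by lia.
have : (0 < #|predC1 v|)%N by rewrite cardC1 card_ord; lia.
case/card_gt0P => x; rewrite inE => xv.
case/connectP: (conn v x) => [[/= _ xv'|y p /= /andP [/existsP [f /andP [/eqP fv_f _]] _] _]].
  by rewrite xv' eqxx in xv.
move/eqP; rewrite cards_eq0 => /eqP val0.
have : f \in [set f | fv f == v] by rewrite inE fv_f.
by rewrite val0 inE.
Qed.

Lemma size_bounds :
  (nV T <= 2 * genus T + #|ends T| + 1)%N /\
  (nF T <= 6 * genus T + 3 * #|ends T| + 3)%N.
Proof.
have flags := card_bounded_ends.
have three_nV : (1 < nV T)%N -> (3 * nV T <= nF T)%N.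
  move=> nV_gt1; rewrite -sum_valence -[X in (3 * X)%N]card_ord mulnC -sum_nat_const.
  by apply: leq_sum => v _; apply: valence_ge3.
rewrite /genus /nbounded; lia.
Qed.

End Counting.

Section Degree.
Variables (n : nat) (Delta : 'rV[int]_n -> nat).

Lemma card_ends_degree (T : ttype n) (S : seq 'rV[int]_n) :
  has_degree Delta T -> uniq S -> 0 \notin S ->
  (forall f, f \in ends T -> wdir f \in S) ->
  #|ends T| = (\sum_(v <- S) Delta v)%N.
Proof.
move=> degT uniqS S_neq0 endsS; rewrite -sum1_card.
transitivity (\sum_(f in ends T) \sum_(v <- S | v == wdir f) 1)%N.
  apply: eq_bigr => f f_end.
  by rewrite -big_filter sum1_size size_filter count_uniq_mem ?endsS.
rewrite (exchange_big_dep xpredT) //=; apply: eq_big_seq => v vS.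
have v_neq0 : v != 0 by apply: contraNneq S_neq0 => <-.
by rewrite (degT v v_neq0) -sum1_card; apply: eq_bigl => f; rewrite !inE eq_sym.
Qed.

Lemma wdir_end_degree (T T' : ttype n) f :
  has_degree Delta T -> has_degree Delta T' -> wdir f != 0 -> f \in ends T ->
  exists2 f' : 'I_(nF T'), f' \in ends T' & wdir f' = wdir f.
Proof.
move=> degT degT' f_neq0 f_end; have : (0 < Delta (wdir f))%N.
  rewrite (degT _ f_neq0) card_gt0; apply/set0Pn; exists f.
  by move: f_end; rewrite !inE eqxx andbT.
rewrite (degT' _ f_neq0) => /card_gt0P [f']; rewrite !inE => /andP [f'_end /eqP e].
by exists f'; rewrite ?inE.
Qed.

Definition end_bound (T0 : ttype n) : nat :=
  \max_(f in ends T0) \max_(j < n) absz (wdir f 0 j)%R.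

Section TwoTypes.
Variables (T T' : ttype n).
Hypotheses (degT : has_degree Delta T) (degT' : has_degree Delta T').
Hypotheses (wdirT_neq0 : forall f : 'I_(nF T), wdir f != 0)
           (wdirT'_neq0 : forall f : 'I_(nF T'), wdir f != 0).

Lemma card_ends_eq : #|ends T| = #|ends T'|.
Proof.
pose S := undup [seq wdir f | f in ends T].
have uniqS : uniq S := undup_uniq _.
have S_neq0 : 0 \notin S.
  apply/negP; rewrite mem_undup => /imageP [f _ /eqP].
  by rewrite eq_sym (negbTE (wdirT_neq0 f)).
have endsT_S (f : 'I_(nF T)) : f \in ends T -> wdir f \in S.
  by move=> f_end; rewrite mem_undup; apply: image_f.
have endsT'_S (f : 'I_(nF T')) : f \in ends T' -> wdir f \in S.
  move=> f_end; have [f0 f0_end <-] := wdir_end_degree degT' degT (wdirT'_neq0 f) f_end.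
  exact: endsT_S.
rewrite (card_ends_degree degT uniqS S_neq0 endsT_S).
by rewrite (card_ends_degree degT' uniqS S_neq0 endsT'_S).
Qed.

Lemma end_coord_bound f j : f \in ends T -> `|wdir f 0 j| <= (end_bound T')%:Z.
Proof.
move=> f_end; have [f' f'_end <-] := wdir_end_degree degT degT' (wdirT_neq0 f) f_end.
rewrite -abszE lez_nat /end_bound (bigD1 f') //= leq_max; apply/orP; left.
exact: leq_bigmax.
Qed.

End TwoTypes.
End Degree.

Section CoordinateBound.
Variables (n : nat) (Delta : 'rV[int]_n -> nat) (T0 T : ttype n).
Hypotheses (degT0 : has_degree Delta T0)
           (wdirT0_neq0 : forall f : 'I_(nF T0), wdir f != 0).
Hypotheses (og : is_open_graph T) (degT : has_degree Delta T).
Variable h : 'I_(nV T) -> 'rV[rat]_n.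
Hypothesis tc : is_tropical_curve h.

Lemma wdir_coord_bound (f : 'I_(nF T)) j :
  `|wdir f 0 j| <= ((#|ends T0| + 1) * end_bound T0)%N%:Z.
Proof.
have wdirT_neq0 := wdir_neq0 og tc.
have end_le g : g \in ends T -> `|wdir g 0 j| <= (end_bound T0)%:Z.
  exact: end_coord_bound degT degT0 wdirT_neq0 g j.
have [bf|ubf] := boolP (bounded f); last first.
  by apply: le_trans (end_le f _) _; rewrite ?inE // lez_nat addn1 mulSn leq_addr.
apply: le_trans (flux_bound og tc j bf) _.
apply: le_trans (ler_sum _ end_le) _.
by rewrite sumr_const (card_ends_eq degT degT0) //; lia.
Qed.

End CoordinateBound.

Section FiniteTypes.
Variable n : nat.

Lemma finite_iso_classes_of_decode (C : finType) (decode : C -> ttype n)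
    (P : ttype n -> Prop) :
  (forall T, P T -> exists c, ttype_iso T (decode c)) ->
  exists m (L : 'I_m -> ttype n), forall T, P T -> exists i, ttype_iso T (L i).
Proof.
move=> decode_onto; exists #|C|, (decode \o enum_val) => T /decode_onto [c iso_c].
by exists (enum_rank c); rewrite /= enum_rankK.
Qed.

Definition type_within (A F D : nat) (T : ttype n) : Prop :=
  [/\ (nV T <= A)%N, (nF T <= F)%N, forall f : 'I_(nF T), (wt f <= D)%N
    & forall (f : 'I_(nF T)) j, `|dir f 0 j| <= D%:Z].

Variables A F D : nat.

(* A type with [a] vertices and [b] flags is coded by its incidence maps, its
   weights and its directions, each coordinate shifted by [D] into ['I_(2D+1)]. *)
Local Notation code a b := ({ffun 'I_b -> 'I_a} * {ffun 'I_b -> 'I_b}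
  * {ffun 'I_b -> 'I_D.+1} * {ffun 'I_b -> {ffun 'I_n -> 'I_D.*2.+1}})%type.
Local Notation sized_code := {ab : 'I_A.+1 * 'I_F.+1 & code ab.1 ab.2}.

Definition decode_type (c : sized_code) : ttype n :=
  @TType n (tag c).1 (tag c).2 (tagged c).1.1.1 (tagged c).1.1.2
    (fun f => (tagged c).1.2 f)
    (fun f => \row_j (((tagged c).2 f j)%:Z - D%:Z)).

Lemma finite_types_within :
  exists m (L : 'I_m -> ttype n),
    forall T, type_within A F D T -> exists i, ttype_iso T (L i).
Proof.
apply: (finite_iso_classes_of_decode (decode := decode_type)).
move=> T [nV_le nF_le wt_le dir_le].
have nV_lt : (nV T < A.+1)%N by rewrite ltnS.
have nF_lt : (nF T < F.+1)%N by rewrite ltnS.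
pose c : code (nV T) (nF T) := ([ffun f => fv f], [ffun f => opp_flag f],
  [ffun f => inord (wt f)], [ffun f => [ffun j => inord (absz (dir f 0 j + D%:Z))]]).
exists (existT (fun ab : 'I_A.+1 * 'I_F.+1 => code ab.1 ab.2)
  (Ordinal nV_lt, Ordinal nF_lt) c).
exists id, id; split; first by exists id.
split; first by exists id.
split=> [f|]; first by rewrite /= ffunE.
split=> [f|]; first by rewrite /= ffunE.
split=> f; first by rewrite /= ffunE inordK // ltnS.
apply/rowP => j; rewrite /= mxE !ffunE; have := dir_le f j; set x := dir f 0 j.
rewrite -abszE; clearbody x => x_le; rewrite inordK; lia.
Qed.

End FiniteTypes.

Theorem proposition2p1 (n : nat) (hn : (2 <= n)%N)
  (Delta : 'rV[int]_n -> nat) (g : nat) :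
  exists (m : nat) (L : 'I_m -> ttype n),
    forall T : ttype n,
      is_open_graph T -> has_degree Delta T -> genus T = g -> realized T ->
      exists i : 'I_m, ttype_iso T (L i).
Proof.
have [[T0 [og0 degT0 _ [h0 tc0]]]|no_curve] := classic (exists T0 : ttype n,
  [/\ is_open_graph T0, has_degree Delta T0, genus T0 = g & realized T0]); last first.
  have [m [L _]] := finite_types_within n 0 0 0.
  by exists m, L => T ogT degT gT reT; case: no_curve; exists T.
have wdirT0_neq0 := wdir_neq0 og0 tc0.
pose K := #|ends T0|; pose D := ((K + 1) * end_bound T0)%N.
have [m [L isoL]] := finite_types_within n (2 * g + K + 1) (6 * g + 3 * K + 3) D.
exists m, L => T ogT degT gT [h tc]; apply: isoL.
have [nV_le nF_le] := size_bounds ogT.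
rewrite gT (card_ends_eq degT degT0 (wdir_neq0 ogT tc) wdirT0_neq0) in nV_le nF_le.
have flag_le f := primitive_scale_bound (dir_primitive tc (f := f)) (wt_gt0 ogT f)
  (wdir_coord_bound degT0 wdirT0_neq0 ogT degT tc f).
by split=> // f; [case: (flag_le f) | case: (flag_le f) => _; apply].
Qed.
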